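(* For an integer $n>1$ define, for every integer $1<r<n$, $$E^{BW,C}_n(r)=\frac{2r(r-1)}{n^2}\sum_{k=r+1}^{n}\frac{n-k}{(k-1)(k-2)},$$ and let $\mathcal{M}(n)$ be a value of $r$ at which $E^{BW,C}_n$ attains its maximum. Let $$\theta=-\frac{1}{2W_{-1}\!\left(-\frac{1}{2\sqrt e}\right)}=e^{\frac12+W_{-1}\left(-\frac{1}{2\sqrt e}\right)}=0.284668\dots,$$ which is the solution in $(0,1)$ of $2x\log x=x-1$. Then (i) $\lim_{n\to\infty}\mathcal{M}(n)/n=\theta$; (ii) $\lim_{n\to\infty}E^{BW,C}_n(\mathcal{M}(n))=\lim_{n\to\infty}E^{BW,C}_n(\lfloor n\theta\rfloor)=\theta(1-\theta)=0.2036321\dots$.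
   Context: $W_{-1}$ denotes the lower real branch of the Lambert $W$ function, i.e. the inverse of $z\mapsto ze^z$ on $(-\infty,-1]$, defined on $[-1/e,0)$. *)

From Stdlib Require Import Reals ZArith.
From Coquelicot Require Import Coquelicot.
Open Scope R_scope.

(* w is the value of the lower real branch W_{-1} at y:
   w <= -1 and w e^w = y (W_{-1} is the inverse of z |-> z e^z on (-oo,-1]). *)
Definition is_LambertWm1 (y w : R) : Prop := w <= -1 /\ w * exp w = y.

Definition E_BWC (n r : nat) : R :=
  2 * INR r * (INR r - 1) / (INR n) ^ 2 *
  sum_n_m (fun k : nat => (INR n - INR k) / ((INR k - 1) * (INR k - 2))) (S r) n.

Definition nat_floor (x : R) : nat := Z.to_nat (Int_part x).

(* The k-th summand splits as (n-2)/(k-2) - (n-2)/(k-1) - 1/(k-1): the first two parts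
   telescope and the harmonic part is squeezed between logarithms, which gives
   |E_n(r) - f(r/n)| <= 4/n uniformly in 2 <= r <= n, for the profile
   f(x) = 2x(1-x) + 2x^2 log x.  Now f'(x) = 2x crit(x) with crit(x) = 1/x - 1 + 2 log x,
   which decreases on (0,1/2], increases on [1/2,1] and vanishes at 1; so f is unimodal on
   (0,1] with its maximum at the zero theta of crit in (0,1/2], where f(theta) = theta(1-theta).
   The Lambert-W expression for theta is exactly this zero (crit theta = 0 is 2 theta log theta
   = theta - 1).  Hence E_n(floor(n theta)) -> f(theta); the maximum E_n(M n) is squeezed
   between E_n(floor(n theta)) and f(theta) + 4/n; and f(M n / n) -> f(theta) forces
   M n / n -> theta by unimodality. *)

From Stdlib Require Import Reals ZArith Lra Lia.
From Coquelicot Require Import Coquelicot.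
Open Scope R_scope.

Lemma Rdiv_le_Rdiv a b c d : 0 < b -> 0 < d -> a * d <= c * b -> a / b <= c / d.
Proof.
  intros Hb Hd H.
  replace (a / b) with (a * d * / (b * d)) by (field; lra).
  replace (c / d) with (c * b * / (b * d)) by (field; lra).
  apply Rmult_le_compat_r; [apply Rlt_le, Rinv_0_lt_compat; nra | exact H].
Qed.

Lemma Rdiv_nonneg a b : 0 <= a -> 0 < b -> 0 <= a / b.
Proof. intros Ha Hb. apply Rmult_le_pos; [exact Ha | apply Rlt_le, Rinv_0_lt_compat, Hb]. Qed.

Lemma ln_le_sub_1 y : 0 < y -> ln y <= y - 1.
Proof.
  intros Hy. pose proof (exp_ineq1_le (ln y)) as H. rewrite exp_ln in H; lra.
Qed.

Lemma ln_increment_bounds x : 0 < x -> / (x + 1) <= ln (x + 1) - ln x <= / x.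
Proof.
  intros Hx. split.
  - pose proof (ln_le_sub_1 (x / (x + 1)) ltac:(apply Rdiv_lt_0_compat; lra)) as H.
    rewrite ln_div in H by lra.
    replace (x / (x + 1) - 1) with (- / (x + 1)) in H by (field; lra). lra.
  - rewrite <- ln_div by lra.
    replace (/ x) with ((x + 1) / x - 1) by (field; lra).
    apply ln_le_sub_1, Rdiv_lt_0_compat; lra.
Qed.

Lemma sum_n_m_between_telescopes (a g h : nat -> R) (r n : nat) : (r <= n)%nat ->
  (forall k, (r < k <= n)%nat -> g k - g (pred k) <= a k <= h k - h (pred k)) ->
  g n - g r <= sum_n_m a (S r) n <= h n - h r.
Proof.
  intros Hrn. induction n as [|n IH]; intros Ha.
  - replace r with 0%nat by lia. rewrite sum_n_m_zero by lia. cbn. lra.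
  - destruct (Nat.eq_dec r (S n)) as [->|Hne].
    + rewrite sum_n_m_zero by lia. cbn. lra.
    + rewrite sum_n_Sm by lia. unfold plus; simpl.
      assert (IHn := IH ltac:(lia) ltac:(intros k Hk; apply Ha; lia)).
      assert (Hlast := Ha (S n) ltac:(lia)). cbn in Hlast. lra.
Qed.

Definition tail_sum (n r : nat) : R :=
  sum_n_m (fun k : nat => (INR n - INR k) / ((INR k - 1) * (INR k - 2))) (S r) n.

Lemma E_BWC_tail_sum n r : E_BWC n r = 2 * INR r * (INR r - 1) / INR n ^ 2 * tail_sum n r.
Proof. reflexivity. Qed.

Definition tail_potential_upper (N x : R) : R := - ((N - 2) / (x - 1)) - ln x.
Definition tail_potential_lower (N x : R) : R := - ((N - 2) / (x - 1)) - ln (x - 1).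

Lemma tail_term_between_increments N K : 3 <= K ->
  tail_potential_lower N K - tail_potential_lower N (K - 1)
    <= (N - K) / ((K - 1) * (K - 2))
    <= tail_potential_upper N K - tail_potential_upper N (K - 1).
Proof.
  intros HK. unfold tail_potential_lower, tail_potential_upper.
  pose proof (ln_increment_bounds (K - 1) ltac:(lra)) as [_ Hup].
  pose proof (ln_increment_bounds (K - 1 - 1) ltac:(lra)) as [Hlo _].
  replace (K - 1 + 1) with K in Hup by ring.
  replace (K - 1 - 1 + 1) with (K - 1) in Hlo by ring.
  replace ((N - K) / ((K - 1) * (K - 2)))
    with ((N - 2) / (K - 1 - 1) - (N - 2) / (K - 1) - / (K - 1)) by (field; lra).
  lra.
Qed.

Lemma tail_sum_bounds n r : (2 <= r <= n)%nat ->
  (INR n - 2) * (/ (INR r - 1) - / (INR n - 1)) - ln ((INR n - 1) / (INR r - 1))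
    <= tail_sum n r
    <= (INR n - 2) * (/ (INR r - 1) - / (INR n - 1)) - ln (INR n / INR r).
Proof.
  intros Hr.
  assert (HR : 2 <= INR r) by (apply (le_INR 2); lia).
  assert (HRN : INR r <= INR n) by (apply le_INR; lia).
  assert (Hterm : forall k, (r < k <= n)%nat ->
    tail_potential_lower (INR n) (INR k) - tail_potential_lower (INR n) (INR (pred k))
      <= (INR n - INR k) / ((INR k - 1) * (INR k - 2))
      <= tail_potential_upper (INR n) (INR k) - tail_potential_upper (INR n) (INR (pred k))).
  { intros k Hk.
    assert (HK : 3 <= INR k) by (replace 3 with (INR 3) by (simpl; lra); apply le_INR; lia).
    rewrite <- Nat.sub_1_r, minus_INR by lia.
    exact (tail_term_between_increments (INR n) (INR k) HK). }
  destruct (sum_n_m_between_telescopes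
    (fun k : nat => (INR n - INR k) / ((INR k - 1) * (INR k - 2)))
    (fun k => tail_potential_lower (INR n) (INR k))
    (fun k => tail_potential_upper (INR n) (INR k)) r n ltac:(lia) Hterm) as [Hlo Hhi].
  unfold tail_potential_lower, tail_potential_upper in Hlo, Hhi. unfold tail_sum.
  rewrite !ln_div by lra.
  replace ((INR n - 2) * (/ (INR r - 1) - / (INR n - 1)))
    with (- ((INR n - 2) / (INR n - 1)) + (INR n - 2) / (INR r - 1)) by (field; lra).
  lra.
Qed.

Definition profile (x : R) : R := 2 * x * (1 - x) + 2 * x ^ 2 * ln x.

Lemma profile_scaled_tail_bounds N R S : 2 <= R <= N ->
  (N - 2) * (/ (R - 1) - / (N - 1)) - ln ((N - 1) / (R - 1)) <= S
    <= (N - 2) * (/ (R - 1) - / (N - 1)) - ln (N / R) ->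
  Rabs (2 * R * (R - 1) / N ^ 2 * S - profile (R / N)) <= 4 / N.
Proof.
  intros HRN [HSlo HShi].
  set (c := 2 * R * (R - 1) / N ^ 2).
  set (L1 := ln (N / R)). set (L2 := ln ((N - 1) / (R - 1))).
  set (A := 2 * R * (N - R) / (N ^ 2 * (N - 1))).
  set (B := 2 * R / N ^ 2 * L1).
  assert (Hc : 0 <= c) by (apply Rdiv_nonneg; nra).
  assert (HN : 0 < N ^ 2 * (N - 1)) by nra.
  assert (HA : 0 <= A <= 2 / N).
  { split; [apply Rdiv_nonneg; nra | apply Rdiv_le_Rdiv; [exact HN | lra |]].
    assert (R * (N - R) <= N * (N - 1)) by nra. nra. }
  assert (HL1 : 0 <= L1 <= N / R - 1).
  { split.
    - unfold L1. rewrite ln_div by lra.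
      assert (ln R <= ln N) by (apply ln_le; lra). lra.
    - apply ln_le_sub_1, Rdiv_lt_0_compat; lra. }
  assert (HB : 0 <= B <= 2 / N).
  { split; [apply Rmult_le_pos; [apply Rdiv_nonneg|]; nra|].
    apply Rle_trans with (2 * R / N ^ 2 * (N / R - 1)); [apply Rmult_le_compat_l; [apply Rdiv_nonneg|]; nra|].
    replace (2 * R / N ^ 2 * (N / R - 1)) with (2 * (N - R) / N ^ 2) by (field; lra).
    apply Rdiv_le_Rdiv; nra. }
  assert (HL21 : c * (L2 - L1) <= 2 / N).
  { assert (L2 - L1 <= (N - R) / (N * (R - 1))).
    { unfold L1, L2. rewrite <- ln_div by (apply Rdiv_lt_0_compat; lra).
      replace ((N - R) / (N * (R - 1))) with ((N - 1) / (R - 1) / (N / R) - 1) by (field; lra).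
      apply ln_le_sub_1, Rdiv_lt_0_compat; apply Rdiv_lt_0_compat; lra. }
    apply Rle_trans with (c * ((N - R) / (N * (R - 1)))); [apply Rmult_le_compat_l; lra|].
    unfold c. replace (2 * R * (R - 1) / N ^ 2 * ((N - R) / (N * (R - 1))))
      with (2 * R * (N - R) / N ^ 3) by (field; lra).
    apply Rdiv_le_Rdiv; nra. }
  assert (Hid : c * ((N - 2) * (/ (R - 1) - / (N - 1)) - L1) - profile (R / N) = - A + B).
  { unfold c, A, B, L1, profile. rewrite !ln_div by lra. field. lra. }
  assert (Hup : c * S <= c * ((N - 2) * (/ (R - 1) - / (N - 1)) - L1))
    by (apply Rmult_le_compat_l; assumption).
  assert (Hlo : c * ((N - 2) * (/ (R - 1) - / (N - 1)) - L2) <= c * S)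
    by (apply Rmult_le_compat_l; assumption).
  apply Rabs_le_between. nra.
Qed.

Lemma E_BWC_approx_profile n r : (2 <= r <= n)%nat ->
  Rabs (E_BWC n r - profile (INR r / INR n)) <= 4 / INR n.
Proof.
  intros Hr. rewrite E_BWC_tail_sum.
  apply profile_scaled_tail_bounds; [split; [apply (le_INR 2) | apply le_INR]; lia|].
  now apply tail_sum_bounds.
Qed.

Lemma strictly_increasing_of_derive_pos (f f' : R -> R) a b :
  (forall x, a <= x <= b -> derivable_pt_lim f x (f' x)) ->
  (forall x, a < x < b -> 0 < f' x) -> a < b -> f a < f b.
Proof.
  intros Hd Hpos Hab.
  destruct (MVT_cor2 f f' a b Hab Hd) as [c [Hc Hcab]].
  assert (0 < f' c * (b - a)) by (apply Rmult_lt_0_compat; [apply Hpos|]; lra).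
  lra.
Qed.

Lemma strictly_decreasing_of_derive_neg (f f' : R -> R) a b :
  (forall x, a <= x <= b -> derivable_pt_lim f x (f' x)) ->
  (forall x, a < x < b -> f' x < 0) -> a < b -> f b < f a.
Proof.
  intros Hd Hneg Hab.
  assert (H : (- f)%F a < (- f)%F b).
  { apply (strictly_increasing_of_derive_pos _ (fun x => - f' x)); [|intros x Hx; specialize (Hneg x Hx); lra|exact Hab].
    intros x Hx. apply derivable_pt_lim_opp, Hd, Hx. }
  unfold opp_fct in H. lra.
Qed.

Definition crit (x : R) : R := / x - 1 + 2 * ln x.

Lemma profile_derive x : 0 < x -> derivable_pt_lim profile x (2 * x * crit x).
Proof.
  intros Hx. apply is_derive_Reals. unfold profile, crit.
  auto_derive; [lra|]. field. lra.
Qed.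

Lemma crit_derive x : 0 < x -> derivable_pt_lim crit x ((2 * x - 1) / x ^ 2).
Proof.
  intros Hx. apply is_derive_Reals. unfold crit.
  auto_derive; [lra|]. field. lra.
Qed.

Lemma crit_decreasing a b : 0 < a < b -> b <= 1/2 -> crit b < crit a.
Proof.
  intros Hab Hb. apply (strictly_decreasing_of_derive_neg _ (fun x => (2 * x - 1) / x ^ 2) a b); [| |lra].
  - intros x Hx. apply crit_derive. lra.
  - intros x Hx. apply Rdiv_neg_pos; nra.
Qed.

Lemma crit_increasing a b : 1/2 <= a < b -> crit a < crit b.
Proof.
  intros Hab. apply (strictly_increasing_of_derive_pos _ (fun x => (2 * x - 1) / x ^ 2) a b); [| |lra].
  - intros x Hx. apply crit_derive. lra.
  - intros x Hx. apply Rdiv_lt_0_compat; nra.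
Qed.

Lemma crit_1 : crit 1 = 0.
Proof. unfold crit. rewrite ln_1. field. Qed.

Lemma crit_theta_of_LambertWm1 w : is_LambertWm1 (- / (2 * sqrt (exp 1))) w ->
  0 < - / (2 * w) <= 1/2 /\ crit (- / (2 * w)) = 0.
Proof.
  intros [Hw1 Hw2].
  assert (Hsqrt : sqrt (exp 1) = exp (1/2)).
  { rewrite <- (sqrt_square (exp (1/2))) by apply Rlt_le, exp_pos.
    now rewrite <- exp_plus, Rplus_half_diag. }
  rewrite Hsqrt in Hw2.
  assert (Hexp := exp_pos (1/2)).
  assert (Hln : ln (- / (2 * w)) = w + 1/2).
  { replace (- / (2 * w)) with (exp w * exp (1/2)).
    - now rewrite <- exp_plus, ln_exp.
    - apply (Rmult_eq_reg_l (2 * w * exp (1/2))); [|nra].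
      replace (2 * w * exp (1/2) * (exp w * exp (1/2))) with (2 * exp (1/2) ^ 2 * (w * exp w)) by ring.
      rewrite Hw2. field. lra. }
  split; [split|].
  - apply Ropp_0_gt_lt_contravar, Rinv_lt_0_compat. lra.
  - replace (- / (2 * w)) with (/ (- 2 * w)) by (field; lra).
    replace (1/2) with (/ 2) by field. apply Rinv_le_contravar; lra.
  - unfold crit. rewrite Hln. field. lra.
Qed.

Lemma is_lim_seq_div_INR c : is_lim_seq (fun n => c / INR n) 0.
Proof.
  replace 0 with (c * 0) by ring.
  apply (is_lim_seq_scal_l (fun n => / INR n) c 0).
  exact (is_lim_seq_inv INR p_infty is_lim_seq_INR ltac:(discriminate)).
Qed.

Lemma is_lim_seq_plus_div_INR (v : nat -> R) (c l : R) :
  is_lim_seq v l -> is_lim_seq (fun n => v n + c / INR n) l.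
Proof.
  intros Hv. replace (Finite l) with (Finite (l + 0)) by (f_equal; ring).
  apply is_lim_seq_plus'; [exact Hv | apply is_lim_seq_div_INR].
Qed.

Lemma is_lim_seq_close (u v : nat -> R) (c l : R) :
  eventually (fun n => Rabs (u n - v n) <= c / INR n) -> is_lim_seq v l -> is_lim_seq u l.
Proof.
  intros Hclose Hv.
  apply (is_lim_seq_le_le_loc (fun n => v n + - c / INR n) _ (fun n => v n + c / INR n));
    [| now apply is_lim_seq_plus_div_INR ..].
  revert Hclose. apply filter_imp. intros n Hn. apply Rabs_le_between in Hn.
  rewrite Rdiv_opp_l. lra.
Qed.

Lemma nat_floor_bounds x : 0 <= x -> INR (nat_floor x) <= x < INR (nat_floor x) + 1.
Proof.
  intros Hx. unfold nat_floor. destruct (base_Int_part x) as [Hle Hgt].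
  assert (Hz : (-1 < Int_part x)%Z) by (apply lt_IZR; lra).
  rewrite INR_IZR_INZ, Z2Nat.id by lia. lra.
Qed.

Lemma is_lim_seq_nat_floor_div x : 0 <= x ->
  is_lim_seq (fun n => INR (nat_floor (INR n * x)) / INR n) x.
Proof.
  intros Hx. apply (is_lim_seq_close _ (fun _ => x) 1); [|apply is_lim_seq_const].
  exists 1%nat. intros n Hn.
  assert (HN : 1 <= INR n) by (apply (le_INR 1); exact Hn).
  destruct (nat_floor_bounds (INR n * x)) as [Hlo Hhi]; [nra|].
  replace (INR (nat_floor (INR n * x)) / INR n - x)
    with ((INR (nat_floor (INR n * x)) - INR n * x) / INR n) by (field; lra).
  rewrite Rabs_div, (Rabs_pos_eq (INR n)) by lra.
  apply Rmult_le_compat_r; [apply Rlt_le, Rinv_0_lt_compat; lra |].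
  rewrite Rabs_left1 by lra. lra.
Qed.

Lemma eventually_nat_floor_between x : 0 < x < 1 ->
  eventually (fun n => (2 <= nat_floor (INR n * x) < n)%nat).
Proof.
  intros Hx.
  destruct (proj2 (is_lim_seq_spec INR p_infty) is_lim_seq_INR (3 / x)) as [N HN].
  exists N. intros n Hn. specialize (HN n Hn).
  assert (H3 : 3 < INR n * x).
  { apply (Rmult_lt_compat_r x) in HN; [|lra]. unfold Rdiv in HN.
    rewrite Rmult_assoc, Rinv_l, Rmult_1_r in HN by lra. exact HN. }
  destruct (nat_floor_bounds (INR n * x)) as [Hlo Hhi]; [lra|].
  split.
  - apply INR_le. simpl. lra.
  - apply INR_lt. nra.
Qed.

Lemma INR_ratio_in_unit r n : (0 < r <= n)%nat -> 0 < INR r / INR n <= 1.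
Proof.
  intros Hr.
  assert (0 < INR r) by (apply lt_0_INR; lia).
  assert (INR r <= INR n) by (apply le_INR; lia).
  split; [apply Rdiv_lt_0_compat; lra|].
  replace 1 with (1 / 1) by field. apply Rdiv_le_Rdiv; lra.
Qed.

Lemma is_lim_seq_E_BWC_nat_floor x : 0 < x < 1 ->
  is_lim_seq (fun n => E_BWC n (nat_floor (INR n * x))) (profile x).
Proof.
  intros Hx.
  apply (is_lim_seq_close _ (fun n => profile (INR (nat_floor (INR n * x)) / INR n)) 4).
  - apply (filter_imp (fun n => (2 <= nat_floor (INR n * x) < n)%nat));
      [| now apply eventually_nat_floor_between].
    intros n Hn. apply E_BWC_approx_profile. lia.
  - apply is_lim_seq_continuous; [|apply is_lim_seq_nat_floor_div; lra].
    apply derivable_continuous_pt. exists (2 * x * crit x). apply profile_derive. lra.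
Qed.

Definition E_BWC_argmax (M : nat -> nat) : Prop :=
  forall n : nat, (2 < n)%nat ->
    (1 < M n)%nat /\ (M n < n)%nat /\
    (forall r : nat, (1 < r)%nat -> (r < n)%nat -> E_BWC n r <= E_BWC n (M n)).

Section ProfileMaximum.

Variable theta : R.
Hypothesis theta_range : 0 < theta <= 1/2.
Hypothesis crit_theta : crit theta = 0.

Lemma crit_pos x : 0 < x < theta -> 0 < crit x.
Proof. intros Hx. rewrite <- crit_theta. apply crit_decreasing; lra. Qed.

Lemma crit_neg x : theta < x < 1 -> crit x < 0.
Proof.
  intros Hx. destruct (Rle_or_lt x (1/2)) as [Hhalf|Hhalf].
  - rewrite <- crit_theta. apply crit_decreasing; lra.
  - rewrite <- crit_1. apply crit_increasing; lra.
Qed.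

Lemma profile_increasing a b : 0 < a < b -> b <= theta -> profile a < profile b.
Proof.
  intros Hab Hb. apply (strictly_increasing_of_derive_pos _ (fun x => 2 * x * crit x)); [| |lra].
  - intros x Hx. apply profile_derive. lra.
  - intros x Hx. assert (0 < crit x) by (apply crit_pos; lra). nra.
Qed.

Lemma profile_decreasing a b : theta <= a < b -> b <= 1 -> profile b < profile a.
Proof.
  intros Hab Hb. apply (strictly_decreasing_of_derive_neg _ (fun x => 2 * x * crit x)); [| |lra].
  - intros x Hx. apply profile_derive. lra.
  - intros x Hx. assert (crit x < 0) by (apply crit_neg; lra). nra.
Qed.

Lemma profile_le_theta x : 0 < x <= 1 -> profile x <= profile theta.
Proof.
  intros Hx. destruct (Rtotal_order x theta) as [H | [-> | H]].
  - left. apply profile_increasing; lra.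
  - lra.
  - left. apply profile_decreasing; lra.
Qed.

Lemma profile_theta : profile theta = theta * (1 - theta).
Proof.
  unfold crit in crit_theta. unfold profile.
  replace (ln theta) with ((1 - / theta) / 2) by lra. field. lra.
Qed.

Lemma profile_near_max_near_theta e : 0 < e <= theta / 2 ->
  exists d, 0 < d /\ forall x, 0 < x <= 1 -> profile theta - d < profile x -> Rabs (x - theta) < e.
Proof.
  intros He.
  assert (Hl : profile (theta - e) < profile theta) by (apply profile_increasing; lra).
  assert (Hr : profile (theta + e) < profile theta) by (apply profile_decreasing; lra).
  exists (Rmin (profile theta - profile (theta - e)) (profile theta - profile (theta + e))).
  split; [apply Rmin_pos; lra|].
  intros x Hx Hpx.
  assert (Hd1 := Rmin_l (profile theta - profile (theta - e)) (profile theta - profile (theta + e))).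
  assert (Hd2 := Rmin_r (profile theta - profile (theta - e)) (profile theta - profile (theta + e))).
  apply Rabs_lt_between. split.
  - destruct (Rlt_or_le (theta - e) x) as [H|H]; [lra|exfalso].
    destruct (Rle_lt_or_eq_dec _ _ H) as [H' | ->]; [|lra].
    assert (profile x < profile (theta - e)) by (apply profile_increasing; lra). lra.
  - destruct (Rlt_or_le x (theta + e)) as [H|H]; [lra|exfalso].
    destruct (Rle_lt_or_eq_dec _ _ H) as [H' | <-]; [|lra].
    assert (profile x < profile (theta + e)) by (apply profile_decreasing; lra). lra.
Qed.

Lemma is_lim_seq_of_profile_max (x : nat -> R) :
  eventually (fun n => 0 < x n <= 1) ->
  is_lim_seq (fun n => profile (x n)) (profile theta) -> is_lim_seq x theta.
Proof.
  intros Hx Hpx. apply is_lim_seq_spec in Hpx. apply is_lim_seq_spec. intros eps.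
  set (e := Rmin eps (theta / 2)).
  assert (He : 0 < e <= theta / 2) by (split; [apply Rmin_pos; [apply cond_pos | lra] | apply Rmin_r]).
  destruct (profile_near_max_near_theta e He) as [d [Hd Hnear]].
  apply (filter_imp (fun n => (0 < x n <= 1) /\ Rabs (profile (x n) - profile theta) < d)).
  - intros n [Hxn Hpxn]. apply Rabs_lt_between in Hpxn.
    apply Rlt_le_trans with e; [apply Hnear; lra | apply Rmin_l].
  - apply filter_and; [exact Hx | exact (Hpx (mkposreal d Hd))].
Qed.

Variable M : nat -> nat.
Hypothesis M_argmax : E_BWC_argmax M.

Lemma eventually_argmax_between : eventually (fun n => (1 < M n < n)%nat).
Proof. exists 3%nat. intros n Hn. destruct (M_argmax n Hn) as (? & ? & _). lia. Qed.

Lemma is_lim_seq_E_BWC_argmax : is_lim_seq (fun n => E_BWC n (M n)) (profile theta).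
Proof.
  apply (is_lim_seq_le_le_loc (fun n => E_BWC n (nat_floor (INR n * theta))) _
           (fun n => profile theta + 4 / INR n)).
  - apply (filter_imp (fun n => (2 <= nat_floor (INR n * theta) < n)%nat));
      [| apply eventually_nat_floor_between; lra].
    intros n Hn. destruct (M_argmax n ltac:(lia)) as (HM1 & HM2 & HMmax).
    split; [apply HMmax; lia|].
    assert (Happrox := E_BWC_approx_profile n (M n) ltac:(lia)).
    apply Rabs_le_between in Happrox.
    assert (profile (INR (M n) / INR n) <= profile theta)
      by (apply profile_le_theta, INR_ratio_in_unit; lia).
    lra.
  - apply is_lim_seq_E_BWC_nat_floor. lra.
  - apply is_lim_seq_plus_div_INR, is_lim_seq_const.
Qed.

Lemma is_lim_seq_argmax_ratio : is_lim_seq (fun n => INR (M n) / INR n) theta.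
Proof.
  apply is_lim_seq_of_profile_max.
  - apply (filter_imp (fun n => (1 < M n < n)%nat)); [|exact eventually_argmax_between].
    intros n Hn. apply INR_ratio_in_unit. lia.
  - apply (is_lim_seq_close _ (fun n => E_BWC n (M n)) 4); [|exact is_lim_seq_E_BWC_argmax].
    apply (filter_imp (fun n => (1 < M n < n)%nat)); [|exact eventually_argmax_between].
    intros n Hn. rewrite Rabs_minus_sym. apply E_BWC_approx_profile. lia.
Qed.

End ProfileMaximum.

Theorem theorem3 (w theta : R) (M : nat -> nat)
  (Hw : is_LambertWm1 (- / (2 * sqrt (exp 1))) w)
  (Htheta : theta = - / (2 * w))
  (HM : forall n : nat, (2 < n)%nat ->
        (1 < M n)%nat /\ (M n < n)%nat /\
        (forall r : nat, (1 < r)%nat -> (r < n)%nat -> E_BWC n r <= E_BWC n (M n))) :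
  is_lim_seq (fun n : nat => INR (M n) / INR n) theta /\
  is_lim_seq (fun n : nat => E_BWC n (M n)) (theta * (1 - theta)) /\
  is_lim_seq (fun n : nat => E_BWC n (nat_floor (INR n * theta))) (theta * (1 - theta)).
Proof.
  destruct (crit_theta_of_LambertWm1 w Hw) as [Hrange Hcrit].
  rewrite <- Htheta in Hrange, Hcrit.
  rewrite <- (profile_theta theta Hrange Hcrit).
  split; [|split].
  - exact (is_lim_seq_argmax_ratio theta Hrange Hcrit M HM).
  - exact (is_lim_seq_E_BWC_argmax theta Hrange Hcrit M HM).
  - apply is_lim_seq_E_BWC_nat_floor. lra.
Qed.
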